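(* Let $(\mathcal{L},\mathcal{D}(\mathcal{L}))$ be the generator of a $C_0$-contraction semigroup on a Banach space $\mathcal{X}$ and $M\in\mathcal{B}(\mathcal{X})$ a contraction such that $\|M^n-P\|_\infty\le\tilde c\,\delta^n$ for some projection $P$, some $\delta\in(0,1)$, $\tilde c\ge0$ and all $n\in\mathbb{N}$. Assume there is $b\ge0$ such that for all $t\ge0$ $$\|Pe^{t\mathcal{L}}(\mathbf{1}-P)\|_\infty\le tb\quad\text{and}\quad\|(\mathbf{1}-P)e^{t\mathcal{L}}P\|_\infty\le tb.$$ If $(P\mathcal{L}P,\mathcal{D}(\mathcal{L}P))$ is the generator of a $C_0$-semigroup, then for $t\ge0$ there exist a constant $c>0$ and $n_0\in\mathbb{N}$ such that $\tilde\delta:=\tilde c\,\delta^{n_0}<1$ and for all $n\in\mathbb{N}$ and all $x\in\mathcal{D}((\mathcal{L}P)^2)$ $$\Big\|\big(M^{n_0}e^{\frac tn\mathcal{L}}\big)^nx-e^{tP\mathcal{L}P}Px\Big\|\le\frac cn\big(\|x\|+\|\mathcal{L}Px\|+\|(\mathcal{L}P)^2x\|\big)+\tilde\delta^n\|x\|.$$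
   Context: $\mathcal{B}(\mathcal{X})$: bounded operators with operator norm $\|\cdot\|_\infty$; $\mathbf{1}$ the identity; contraction: norm at most $1$; projection: bounded idempotent. A $C_0$-contraction semigroup is a strongly continuous semigroup of contractions, denoted $e^{t\mathcal{L}}$ by its generator. Domains: $\mathcal{D}(\mathcal{L}P)=\{x:Px\in\mathcal{D}(\mathcal{L})\}$, $\mathcal{D}((\mathcal{L}P)^2)=\{x\in\mathcal{D}(\mathcal{L}P):\mathcal{L}Px\in\mathcal{D}(\mathcal{L}P)\}$; $P\mathcal{L}P$ is considered on $\mathcal{D}(\mathcal{L}P)$. *)

From HB Require Import structures.
From mathcomp Require Import all_boot all_order all_algebra.
From mathcomp Require Import all_classical all_reals all_analysis.
Set Implicit Arguments. Unset Strict Implicit. Unset Printing Implicit Defensive.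
Import Order.TTheory GRing.Theory Num.Theory.
Import numFieldNormedType.Exports.
Local Open Scope classical_set_scope.
Local Open Scope ring_scope.

Section Defs.
Context {R : realType} {X : completeNormedModType R}.

Definition is_linear (A : X -> X) : Prop :=
  forall (a : R) (x y : X), A (a *: x + y) = a *: A x + A y.

Definition opnorm_le (A : X -> X) (r : R) : Prop :=
  forall x : X, `|A x| <= r * `|x|.

Definition bounded_op (A : X -> X) : Prop :=
  is_linear A /\ exists C : R, opnorm_le A C.

Definition contraction_op (A : X -> X) : Prop :=
  is_linear A /\ opnorm_le A 1.

Definition projection_op (P : X -> X) : Prop :=
  bounded_op P /\ (forall x, P (P x) = P x).

(* C_0-semigroup (t |-> T t, only t >= 0 relevant) *)
Definition C0_semigroup (T : R -> X -> X) : Prop :=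
  (forall t, 0 <= t -> bounded_op (T t)) /\
  (forall x, T 0 x = x) /\
  (forall s t x, 0 <= s -> 0 <= t -> T (s + t) x = T s (T t x)) /\
  (forall x, T^~ x @ at_right 0 --> x).

Definition C0_contraction_semigroup (T : R -> X -> X) : Prop :=
  C0_semigroup T /\ (forall t, 0 <= t -> opnorm_le (T t) 1).

Definition diffq (T : R -> X -> X) (x : X) : R -> X :=
  fun h => h^-1 *: (T h x - x).

Definition generator_of (T : R -> X -> X) (D : set X) (L : X -> X) : Prop :=
  (forall x, D x <-> exists l : X, diffq T x @ at_right 0 --> l) /\
  (forall x, D x -> diffq T x @ at_right 0 --> L x).

End Defs.

(* Let tau = t / n, W = M^n0 T(tau) with dt = ct delta^n0 < 1, and u_k = W^k x.
   Since M^n0 - P has norm at most dt and vanishes on ran P, the off-range part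
   u_k - P u_k contracts by dt at each step, up to a leak of size tau b |x| through
   (1 - P) T P; hence it is at most dt^n |x| + O(1/n) after n steps.  The part P u_k
   follows the Chernoff iterates (P T(tau) P)^k P x, up to leaks through P T (1 - P)
   whose sum is O(1/n) because the off-range parts decay geometrically.  Finally
   (P T(tau) P)^n P x = S(t) P x + O(1/n) by telescoping: each step commits an error
   O(tau^2), read off from second order Taylor expansions of T and of S at S(s) P x,
   which stays in ran P and in the domain of (LP)^2; S is bounded on [0, t] by the
   Banach-Steinhaus theorem. *)

From HB Require Import structures.
From mathcomp Require Import all_boot all_order all_algebra.
From mathcomp Require Import all_classical all_reals all_analysis.
From mathcomp Require Import ring lra.
Import Order.TTheory GRing.Theory Num.Theory.
Import numFieldNormedType.Exports.
Local Open Scope classical_set_scope.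
Local Open Scope ring_scope.
Set Implicit Arguments. Unset Strict Implicit. Unset Printing Implicit Defensive.

Section RealFacts.
Context {R : realType}.
Implicit Types (a d e s : R).

Lemma mul_div_addr1_lt a e : 0 <= a -> 0 < e -> a * (e / (a + 1)) < e.
Proof.
move=> a0 e0; rewrite mulrA ltr_pdivrMr ?ltr_wpDl // mulrC ltr_pM2l //.
by rewrite ltrDl.
Qed.

Lemma exists_geometric_lt (C q e : R) : 0 <= C -> `|q| < 1 -> 0 < e ->
  exists2 n : nat, (0 < n)%N & C * q ^+ n < e.
Proof.
move=> C0 q1 e0; have eC0 : 0 < e / (C + 1) by rewrite divr_gt0 // ltr_wpDl.
have [N _ HN] := cvgr_lt _ (cvg_expr q1) _ eC0.
exists N.+1 => //; apply: le_lt_trans (mul_div_addr1_lt C0 e0).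
by rewrite ler_wpM2l // ltW //; apply: HN => /=.
Qed.

Lemma exists_nat_div_lt s d : 0 <= s -> 0 < d ->
  exists2 m : nat, (0 < m)%N & s / m%:R < d.
Proof.
move=> s0 d0; exists (Num.truncn (s / d)).+1 => //.
by rewrite ltr_pdivrMr ?ltr0n // mulrC -ltr_pdivrMr // truncnS_gt.
Qed.

Lemma exists_subdivision s d : 0 < s -> 0 < d ->
  exists2 m : nat, (0 < m)%N & exists2 h : R, 0 < h < d & m%:R * h = s.
Proof.
move=> s0 d0; have [m m0 hm] := exists_nat_div_lt (ltW s0) d0.
exists m => //; exists (s / m%:R); first by rewrite hm divr_gt0 ?ltr0n.
by rewrite mulrC divfK // pnatr_eq0 -lt0n.
Qed.

Lemma telescope_le (u : nat -> R) (c : R) (m : nat) :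
  (forall j, (j < m)%N -> u j.+1 <= u j + c) -> u m <= u 0%N + m%:R * c.
Proof.
elim: m => [|m IH] hu; first by rewrite mul0r addr0.
apply: le_trans (hu m (ltnSn m)) _; rewrite -natr1 mulrDl mul1r addrA lerD2r.
by apply: IH => j /ltnW; exact: hu.
Qed.

Lemma affine_recursion_le (u : nat -> R) (q A B : R) :
  0 <= q < 1 -> 0 <= B -> u 0%N <= A -> (forall k, u k.+1 <= q * u k + B) ->
  forall k, u k <= q ^+ k * A + B / (1 - q).
Proof.
case/andP=> q0 q1 B0 u0 hu; have q1' : 0 < 1 - q by rewrite subr_gt0.
elim=> [|k IH]; first by rewrite expr0 mul1r (le_trans u0) // lerDl divr_ge0 // ltW.
have -> : q ^+ k.+1 * A + B / (1 - q) = q * (q ^+ k * A + B / (1 - q)) + B.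
  by rewrite exprS; field; rewrite gt_eqF.
by apply: le_trans (hu k) _; rewrite lerD2r ler_wpM2l.
Qed.

(* the potential [v k + a C q^k / (1 - q)] grows by at most [a B] per step *)
Lemma geometric_forcing_le (v : nat -> R) (q a C B : R) : 0 <= q < 1 ->
  0 <= a -> 0 <= C -> (forall k, v k.+1 <= v k + a * (q ^+ k * C + B)) ->
  forall n, v n <= v 0%N + a * (C / (1 - q) + n%:R * B).
Proof.
case/andP=> q0 q1 a0 C0 hv n; have q1' : 0 < 1 - q by rewrite subr_gt0.
have := telescope_le (u := fun k => v k + a * (q ^+ k * C / (1 - q)))
  (c := a * B) (m := n).
rewrite /= expr0 mul1r => tele.
apply: le_trans (_ : _ <= v n + a * (q ^+ n * C / (1 - q))) _.
  by rewrite lerDl mulr_ge0 // divr_ge0 ?mulr_ge0 ?exprn_ge0 // ltW.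
apply: le_trans (tele _) _ => [k _|]; last by rewrite -addrA (mulrCA n%:R) -mulrDr.
have -> : q ^+ k * C / (1 - q) = q ^+ k * C + q ^+ k.+1 * C / (1 - q).
  by rewrite exprS; field; rewrite gt_eqF.
apply: le_trans (lerD (hv k) (lexx _)) _; rewrite -!addrA lerD2l !mulrDr.
by rewrite addrAC.
Qed.

End RealFacts.

Section LinearOperators.
Context {R : realType} {X : completeNormedModType R}.
Implicit Types (A : X -> X) (x y : X).

Lemma is_linear0 A : is_linear A -> A 0 = 0.
Proof.
move=> hA; have := hA 1 0 0; rewrite !scale1r addr0.
by move/(congr1 (fun v => v - A 0)); rewrite subrr addrK.
Qed.

Lemma is_linearD A : is_linear A -> forall x y, A (x + y) = A x + A y.
Proof. by move=> hA x y; have := hA 1 x y; rewrite !scale1r. Qed.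

Lemma is_linearZ A : is_linear A -> forall a x, A (a *: x) = a *: A x.
Proof. by move=> hA a x; have := hA a x 0; rewrite !addr0 is_linear0 // addr0. Qed.

Lemma is_linearB A : is_linear A -> forall x y, A (x - y) = A x - A y.
Proof. by move=> hA x y; rewrite is_linearD // -scaleN1r is_linearZ // scaleN1r. Qed.

Lemma is_linear_iter A n : is_linear A -> is_linear (iter n A).
Proof. by move=> hA; elim: n => [//|n IH] a x y /=; rewrite IH hA. Qed.

Lemma contraction_iter A n x : contraction_op A -> `|iter n A x| <= `|x|.
Proof.
case=> _ hA; elim: n => [//|n IH] /=.
by apply: le_trans IH; rewrite -[X in _ <= X]mul1r hA.
Qed.

Lemma projection_linear (P : X -> X) : projection_op P -> is_linear P.
Proof. by case=> [[]]. Qed.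

Lemma projection_idem (P : X -> X) : projection_op P -> forall x, P (P x) = P x.
Proof. by case. Qed.

End LinearOperators.

Lemma cvg_at_right0P {R : realType} {X : completeNormedModType R}
    (f : R -> X) (l : X) :
  f @ 0^'+ --> l <-> forall e, 0 < e ->
    exists2 d : R, 0 < d & forall h, 0 < h -> h < d -> `|f h - l| <= e.
Proof.
split=> [/cvgrPdist_le fl e e0 | fl].
  have /nbhs_ballP [d d0 hd] := fl e e0; exists d => // h h0 hdh.
  rewrite distrC; apply: (hd h) => //.
  by rewrite -ball_normE /= sub0r normrN gtr0_norm.
apply/cvgrPdist_le => e e0; have [d d0 hd] := fl e e0.
apply/nbhs_ballP; exists d => // h /=.
rewrite -ball_normE /= sub0r normrN => hdh h0; rewrite distrC.
by apply: hd; rewrite // (le_lt_trans (ler_norm h)).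
Qed.

Section Semigroups.
Context {R : realType} {X : completeNormedModType R}.
Implicit Types (U : R -> X -> X) (B : X -> X) (x z l : X).

Definition linear_semigroup U : Prop :=
  [/\ forall r, 0 <= r -> is_linear (U r), forall x, U 0 x = x &
      forall r s x, 0 <= r -> 0 <= s -> U (r + s) x = U r (U s x)].

Lemma C0_semigroup_linear U : C0_semigroup U -> linear_semigroup U.
Proof. by case=> Ub [U0 [Usg _]]; split=> // r /Ub []. Qed.

Lemma diffq_sub U z l h : h != 0 -> U h z - z - h *: l = h *: (diffq U z h - l).
Proof. by move=> h0; rewrite /diffq scalerBr scalerA mulfV ?scale1r. Qed.

Lemma semigroup_increment_le U z l s K : linear_semigroup U -> 0 <= s -> 0 <= K ->
  (forall r x, 0 <= r -> r <= s -> `|U r x| <= K * `|x|) ->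
  diffq U z @ 0^'+ --> l -> `|U s z - z| <= s * K * `|l|.
Proof.
case=> Ulin U0 Usg; rewrite le_eqVlt => /predU1P[<- _ _ _|s_gt0 K0 UK /cvg_at_right0P Uz].
  by rewrite U0 subrr normr0 !mul0r.
apply/ler_addgt0Pr => e e0; have sK0 : 0 <= s * K by rewrite mulr_ge0 // ltW.
set eps := e / (s * K + 1).
have [d d0 Uzd] := Uz eps (divr_gt0 e0 (ltr_wpDl sK0 ltr01)).
have [m _ [h /andP[h0 hd] mh]] := exists_subdivision s_gt0 d0.
have Uh : `|U h z - z| <= h * (`|l| + eps).
  rewrite -(subrK (h *: l) (U h z - z)) diffq_sub ?gt_eqF //.
  apply: le_trans (ler_normD _ _) _; rewrite !normrZ gtr0_norm // mulrDr.
  by rewrite [h * `|l| + _]addrC lerD2r; apply: ler_wpM2l; [exact: ltW | exact: Uzd].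
have tele := telescope_le (u := fun j => `|U (j%:R * h) z - z|)
  (c := K * (h * (`|l| + eps))) (m := m).
rewrite /= mul0r U0 subrr normr0 add0r mh in tele.
apply: le_trans (tele _) _ => [j jm|]; last first.
  have -> : m%:R * (K * (h * (`|l| + eps))) = s * K * `|l| + s * K * eps.
    by rewrite -mh; ring.
  by rewrite lerD2l ltW // mul_div_addr1_lt.
have r0 : 0 <= j%:R * h by rewrite mulr_ge0 // ltW.
have rs : j%:R * h <= s by rewrite -mh ler_wpM2r ?ler_nat ?(ltnW jm) // ltW.
rewrite -natr1 mulrDl mul1r (Usg _ _ _ r0 (ltW h0)).
have -> : U (j%:R * h) (U h z) - z = U (j%:R * h) (U h z - z) + (U (j%:R * h) z - z).
  by rewrite (is_linearB (Ulin _ r0)) addrA subrK.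
apply: le_trans (ler_normD _ _) _; rewrite addrC lerD2l.
by apply: le_trans (UK _ _ r0 rs) _; rewrite ler_wpM2l.
Qed.

Lemma semigroup_taylor_le U B z l s K G : linear_semigroup U -> is_linear B ->
  0 <= s -> 0 <= K -> 0 <= G ->
  (forall r x, 0 <= r -> r <= s -> `|B (U r x)| <= K * `|x|) ->
  (forall r, 0 <= r -> r <= s -> `|B (U r l - l)| <= r * G) ->
  diffq U z @ 0^'+ --> l -> `|B (U s z - z - s *: l)| <= s ^+ 2 * G.
Proof.
case=> Ulin U0 Usg Blin.
rewrite le_eqVlt => /predU1P[<- _ _ _ _ _|s_gt0 K0 G0 BUK BUl /cvg_at_right0P Uz].
  by rewrite U0 subrr scale0r subr0 is_linear0 // normr0 expr0n /= mul0r.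
apply/ler_addgt0Pr => e e0; have sK0 : 0 <= s * K by rewrite mulr_ge0 // ltW.
set eps := e / (s * K + 1).
have [d d0 Uzd] := Uz eps (divr_gt0 e0 (ltr_wpDl sK0 ltr01)).
have [m _ [h /andP[h0 hd] mh]] := exists_subdivision s_gt0 d0.
have Uh : `|U h z - z - h *: l| <= h * eps.
  rewrite diffq_sub ?gt_eqF // normrZ gtr0_norm //.
  by apply: ler_wpM2l; [exact: ltW | exact: Uzd].
(* subtracting [(j h)^2 G] turns the quadratic growth into a linear one *)
have tele := telescope_le
  (u := fun j => `|B (U (j%:R * h) z - z - (j%:R * h) *: l)| - (j%:R * h) ^+ 2 * G)
  (c := K * (h * eps)) (m := m).
rewrite /= mul0r U0 subrr scale0r subr0 is_linear0 // normr0 expr0n /= mul0r in tele.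
rewrite subr0 add0r mh lerBlDr in tele.
apply: le_trans (tele _) _ => [j jm|]; last first.
  have -> : m%:R * (K * (h * eps)) = s * K * eps by rewrite -mh; ring.
  by rewrite addrC lerD2l ltW // mul_div_addr1_lt.
have r0 : 0 <= j%:R * h by rewrite mulr_ge0 // ltW.
have rs : j%:R * h <= s by rewrite -mh ler_wpM2r ?ler_nat ?(ltnW jm) // ltW.
set r := j%:R * h in r0 rs *.
rewrite -natr1 mulrDl mul1r -/r (Usg _ _ _ r0 (ltW h0)).
have -> : U r (U h z) - z - (r + h) *: l =
    U r (U h z - z - h *: l) + (U r z - z - r *: l) + h *: (U r l - l).
  rewrite !(is_linearB (Ulin _ r0)) (is_linearZ (Ulin _ r0)) scalerDl scalerBr.
  rewrite opprD -!addrA (addrCA (- (h *: U r l)) (U r z)) addKr.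
  by rewrite (addrCA (- (h *: U r l)) (- z)) (addrCA (- (h *: U r l)) (- (r *: l))) addKr.
rewrite (is_linearD Blin) (is_linearD Blin (U r _)) (is_linearZ Blin).
set a := B (U r _); set c := B (U r z - z - r *: l); set g := B (U r l - l).
have ha : `|a| <= K * (h * eps) := le_trans (BUK _ _ r0 rs) (ler_wpM2l K0 Uh).
have hg : `|h *: g| <= h * (r * G).
  by rewrite normrZ gtr0_norm //; apply: ler_wpM2l; [exact: ltW | exact: BUl].
have hG : r ^+ 2 * G + h * (r * G) <= (r + h) ^+ 2 * G.
  rewrite -subr_ge0 (_ : _ - _ = h * (r + h) * G); last by ring.
  by rewrite !mulr_ge0 ?addr_ge0 // ltW.
have := le_trans (ler_normD _ _) (lerD (ler_normD a c) hg).
lra.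
Qed.

End Semigroups.

Section C0Semigroups.
Context {R : realType} {X : completeNormedModType R}.
Implicit Types (U : R -> X -> X) (x y : X).

Lemma C0_pointwise_bounded_near0 U (s : nat -> R) : C0_semigroup U ->
  (forall n, 0 <= s n <= n.+1%:R^-1) ->
  pointwise_bounded (range (fun n => U (s n))).
Proof.
case=> _ [U0 [_ Ucont]] s_small x.
have [d d0 Ud] := (cvg_at_right0P _ _).1 (Ucont x) 1 ltr01.
have [m m0 md] := exists_nat_div_lt ler01 d0.
exists (Num.max (\big[Num.max/0]_(i < m) `|U (s i) x|) (`|x| + 1)).
move=> _ [n _ <-]; rewrite le_max; have [nm|mn] := ltnP n m.
  by rewrite (le_bigmax 0 (fun i : 'I_m => `|U (s i) x|) (Ordinal nm)).
apply/orP; right; have /andP[sn0 snn] := s_small n.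
move: sn0; rewrite le_eqVlt => /predU1P[<-|sn0]; first by rewrite U0 lerDl.
rewrite -[U (s n) x](subrK x) (le_trans (ler_normD _ _)) // addrC lerD2l.
apply: Ud => //; apply: le_lt_trans snn (le_lt_trans _ md).
by rewrite div1r lef_pV2 ?posrE ?ltr0n // ler_nat leqW.
Qed.

Lemma C0_semigroup_bounded_near0 U : C0_semigroup U ->
  exists d K : R, [/\ 0 < d, 1 <= K &
    forall s x, 0 <= s -> s <= d -> `|U s x| <= K * `|x|].
Proof.
move=> hU; apply: contrapT => unbounded.
have bad n : exists s : R,
    0 <= s <= n.+1%:R^-1 /\ exists x, n.+1%:R * `|x| < `|U s x|.
  apply: contrapT => good; apply: unbounded; exists n.+1%:R^-1, n.+1%:R.
  split=> [||s x s0 sn]; rewrite ?invr_gt0 ?ler1n ?ltr0n //.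
  by rewrite leNgt; apply/negP => Ux; apply: good; exists s; split; [apply/andP|exists x].
have [s /all_and2 [s_small s_bad]] := choice bad.
have s0 n : 0 <= s n by case/andP: (s_small n).
have Ulin n : is_linear (U (s n)) by case: (hU.1 (s n) (s0 n)).
have Ubd f : range (fun n => U (s n)) f -> bounded_fun_norm f /\ linear f.
  case=> n _ <-; split=> [r|]; last exact: Ulin.
  have [_ [C UC]] := hU.1 (s n) (s0 n); exists (`|C| * r) => x xr; apply: le_trans (UC x) _.
  by rewrite (le_trans (ler_wpM2r (normr_ge0 _) (ler_norm C))) // ler_wpM2l.
have [M UM] := Banach_Steinhauss Ubd (C0_pointwise_bounded_near0 hU s_small) 1.
set N := Num.truncn M; have [x Ux] := s_bad N.
have x0 : 0 < `|x|.
  by rewrite normr_gt0; apply: contraTneq Ux => ->; rewrite is_linear0 // normr0 mulr0 ltxx.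
have ux : Num.norm (`|x|^-1 *: x) <= 1 by rewrite normrZ normfV normr_id mulVf ?gt_eqF.
have := UM _ (ex_intro2 _ _ N I erefl) _ ux.
rewrite (is_linearZ (Ulin N)) normrZ normfV normr_id ler_pdivrMl // => /(lt_le_trans Ux).
by rewrite mulrC ltr_pM2l // => /(lt_trans (truncnS_gt M)); rewrite ltxx.
Qed.

Lemma C0_semigroup_locally_bounded U t : C0_semigroup U -> 0 <= t ->
  exists K : R, 1 <= K /\ forall s x, 0 <= s -> s <= t -> `|U s x| <= K * `|x|.
Proof.
move=> hU t0; have [_ U0 Usg] := C0_semigroup_linear hU.
have [d [K [d0 K1 UK]]] := C0_semigroup_bounded_near0 hU.
have [N N0 tN] := exists_nat_div_lt t0 d0.
exists (K ^+ N); split=> [|s x s0 st]; first exact: exprn_ege1.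
have r0 : 0 <= s / N%:R by rewrite divr_ge0.
have rd : s / N%:R <= d.
  by apply/ltW; apply: le_lt_trans _ tN; rewrite ler_wpM2r // invr_ge0.
have powers j y : `|U (j%:R * (s / N%:R)) y| <= K ^+ j * `|y|.
  elim: j y => [|j IH] y; first by rewrite mul0r U0 expr0 mul1r.
  rewrite -natr1 mulrDl mul1r Usg ?mulr_ge0 //; apply: le_trans (IH _) _.
  rewrite exprSr -mulrA ler_wpM2l ?exprn_ge0 ?(le_trans ler01) //.
  exact: UK.
by have := powers N x; rewrite mulrC divfK // pnatr_eq0 -lt0n.
Qed.

Lemma C0_generator_comm U D A s y : C0_semigroup U -> generator_of U D A ->
  0 <= s -> D y -> D (U s y) /\ A (U s y) = U s (A y).
Proof.
move=> hU [DP AP] s0 Dy; have [_ _ Usg] := C0_semigroup_linear hU.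
have [Uslin [C UC]] := hU.1 s s0.
have dq : diffq U (U s y) @ 0^'+ --> U s (A y).
  apply/cvg_at_right0P => e e0.
  have [d d0 hd] := (cvg_at_right0P _ _).1 (AP y Dy) _
    (divr_gt0 e0 (ltr_wpDl (normr_ge0 C) ltr01)).
  exists d => // h h0 hdh.
  have -> : diffq U (U s y) h = U s (diffq U y h).
    rewrite /diffq (is_linearZ Uslin) (is_linearB Uslin).
    by rewrite -(Usg _ _ _ (ltW h0) s0) (addrC h s) (Usg _ _ _ s0 (ltW h0)).
  rewrite -(is_linearB Uslin); apply: le_trans (UC _) _.
  rewrite (le_trans (ler_wpM2r (normr_ge0 _) (ler_norm C))) //.
  apply: le_trans (ltW (mul_div_addr1_lt (normr_ge0 C) e0)).
  by rewrite ler_wpM2l //; exact: hd.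
have Dsy : D (U s y) by apply/DP; exists (U s (A y)).
by split=> //; apply: (cvg_unique _ (AP _ Dsy) dq); exact: norm_hausdorff.
Qed.

Lemma C0_taylor_le U D A s K u : C0_semigroup U -> generator_of U D A ->
  0 <= s -> 0 <= K -> (forall r x, 0 <= r -> r <= s -> `|U r x| <= K * `|x|) ->
  D u -> D (A u) -> `|U s u - u - s *: A u| <= s ^+ 2 * (K * `|A (A u)|).
Proof.
move=> hU [_ AP] s0 K0 UK Du DAu; have Ulin := C0_semigroup_linear hU.
apply: (semigroup_taylor_le (B := id) (K := K) Ulin) (AP _ Du) => //.
- by rewrite mulr_ge0.
- move=> r r0 rs; rewrite mulrA.
  apply: (semigroup_increment_le Ulin r0 K0) (AP _ DAu) => r' x r'0 r'r.
  by apply: UK => //; apply: le_trans rs.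
Qed.

Lemma C0_kernel_invariant U D A B s y : C0_semigroup U -> generator_of U D A ->
  bounded_op B -> (forall x, D x -> B (A x) = 0) ->
  0 <= s -> D y -> D (A y) -> B y = 0 -> B (U s y) = 0.
Proof.
move=> hU gen [Blin [C BC]] BA0 s0 Dy DAy By0.
have [_ U0 Usg] := C0_semigroup_linear hU.
have [K [K1 UK]] := C0_semigroup_locally_bounded hU s0.
have K0 : 0 <= K := le_trans ler01 K1.
move: s0; rewrite le_eqVlt => /predU1P[<-|s_gt0]; first by rewrite U0.
apply/eqP; rewrite -normr_le0; apply/ler_addgt0Pr => e e0; rewrite add0r.
set c := `|C| * K * K * `|A (A y)|.
have sc0 : 0 <= s * c by rewrite !mulr_ge0 // ltW.
have [m m0 [h /andP[h0 hd] mh]] :=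
  exists_subdivision s_gt0 (divr_gt0 e0 (ltr_wpDl sc0 ltr01)).
have hs : h <= s by rewrite -mh ler_peMl ?ler1n // ltW.
have tele := telescope_le (u := fun j => `|B (U (j%:R * h) y)|) (c := h ^+ 2 * c) (m := m).
rewrite /= mul0r U0 By0 normr0 add0r mh in tele.
apply: le_trans (tele _) _ => [j jm|]; last first.
  rewrite (_ : _ * _ = s * c * h); last by rewrite -mh; ring.
  apply: ltW; apply: le_lt_trans (mul_div_addr1_lt sc0 e0).
  by rewrite ler_wpM2l // ltW.
have r0 : 0 <= j%:R * h by rewrite mulr_ge0 // ltW.
have rs : j%:R * h <= s by rewrite -mh ler_wpM2r ?ler_nat ?(ltnW jm) // ltW.
set r := j%:R * h in r0 rs *.
have [Du Au] := C0_generator_comm hU gen r0 Dy.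
have [DAu AAu] := C0_generator_comm hU gen r0 DAy.
rewrite -Au in DAu AAu.
rewrite -natr1 mulrDl mul1r addrC (Usg _ _ _ (ltW h0) r0).
set u := U r y in Du Au DAu AAu *.
have -> : B (U h u) = B (U h u - u - h *: A u) + B u.
  by rewrite !(is_linearB Blin) (is_linearZ Blin) BA0 // scaler0 subr0 subrK.
apply: le_trans (ler_normD _ _) _; rewrite addrC lerD2l.
apply: le_trans (BC _) _; apply: le_trans (ler_wpM2r (normr_ge0 _) (ler_norm C)) _.
rewrite (_ : h ^+ 2 * c = `|C| * (h ^+ 2 * (K * (K * `|A (A y)|)))); last first.
  by rewrite /c; ring.
apply: ler_wpM2l => //.
have taylor := C0_taylor_le hU gen (ltW h0) K0
  (fun r' x r'0 r'h => UK r' x r'0 (le_trans r'h hs)) Du DAu.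
apply: le_trans taylor _; rewrite AAu.
by rewrite ler_wpM2l ?sqr_ge0 // ler_wpM2l // UK.
Qed.

End C0Semigroups.

Section ProjectionLimit.
Context {R : realType} {X : completeNormedModType R}.
Variables (M P : X -> X) (ct delta : R).
Hypotheses (hM : contraction_op M) (delta0 : 0 < delta) (delta1 : delta < 1)
  (ct0 : 0 <= ct)
  (hMP : forall n : nat, (1 <= n)%N ->
     opnorm_le (fun x => iter n M x - P x) (ct * delta ^+ n)).

Let delta_norm_lt1 : `|delta| < 1. Proof. by rewrite gtr0_norm. Qed.

Lemma geometric_decr n : ct * delta ^+ n.+1 <= ct * delta ^+ n.
Proof. by rewrite ler_wpM2l // exprS ler_piMl ?exprn_ge0 // ltW. Qed.

Lemma geometric_le_eq0 (v : X) (C : R) : 0 <= C ->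
  (forall n : nat, (0 < n)%N -> `|v| <= C * (ct * delta ^+ n)) -> v = 0.
Proof.
move=> C0 vC; apply/eqP; rewrite -normr_le0; apply/ler_addgt0Pr => e e0.
have [n n0 small] := exists_geometric_lt (mulr_ge0 C0 ct0) delta_norm_lt1 e0.
by rewrite add0r (le_trans (vC n n0)) // mulrA ltW.
Qed.

Lemma P_norm_le x : `|P x| <= `|x|.
Proof.
apply/ler_addgt0Pr => e e0.
have [n n0 small] :=
  exists_geometric_lt (mulr_ge0 ct0 (normr_ge0 x)) delta_norm_lt1 e0.
rewrite -[P x]subr0; apply: le_trans (ler_distD (iter n M x) _ _) _.
rewrite subr0 addrC distrC.
rewrite lerD ?contraction_iter // (le_trans (hMP n0 x)) //.
by rewrite mulrAC ltW.
Qed.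

Lemma M_fixes_range x : M (P x) = P x.
Proof.
apply/subr0_eq/(@geometric_le_eq0 _ (`|x| + `|x|)) => [|n n0].
  by rewrite addr_ge0.
apply: le_trans (ler_distD (iter n.+1 M x) _ _) _; rewrite mulrDl mulrC.
apply: lerD; last first.
  by apply: le_trans (hMP (ltn0Sn n) x) _; rewrite ler_wpM2r ?geometric_decr.
rewrite iterS -(is_linearB hM.1); apply: le_trans (hM.2 _) _.
by rewrite mul1r distrC; exact: hMP.
Qed.

Lemma P_absorbs_M x : P (M x) = P x.
Proof.
apply/subr0_eq/(@geometric_le_eq0 _ (`|x| + `|x|)) => [|n n0].
  by rewrite addr_ge0.
apply: le_trans (ler_distD (iter n.+1 M x) _ _) _; rewrite mulrDl mulrC.
apply: lerD; last first.
  by apply: le_trans (hMP (ltn0Sn n) x) _; rewrite ler_wpM2r ?geometric_decr.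
rewrite iterSr distrC; apply: le_trans (hMP n0 _) _.
apply: ler_wpM2l; first by rewrite mulr_ge0 // exprn_ge0 // ltW.
by rewrite -[X in _ <= X]mul1r hM.2.
Qed.

Lemma iter_M_range k y : iter k M (P y) = P y.
Proof. by elim: k => //= k ->; rewrite M_fixes_range. Qed.

Lemma P_iter_M k y : P (iter k M y) = P y.
Proof. by elim: k => //= k IH; rewrite P_absorbs_M. Qed.

End ProjectionLimit.

Section ProjectedSemigroups.
Context {R : realType} {X : completeNormedModType R}.
Variables (T S : R -> X -> X) (D : set X) (L P : X -> X) (b : R).
Hypotheses (hT : C0_contraction_semigroup T) (hgT : generator_of T D L)
  (hP : projection_op P) (P_le : forall x, `|P x| <= `|x|) (b0 : 0 <= b)
  (hb : forall t : R, 0 <= t ->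
     opnorm_le (fun x => P (T t (x - P x))) (t * b) /\
     opnorm_le (fun x => T t (P x) - P (T t (P x))) (t * b))
  (hS : C0_semigroup S)
  (hgS : generator_of S [set x | D (P x)] (fun x => P (L (P x)))).

Let Plin := projection_linear hP.
Let PP := projection_idem hP.

Lemma T_linear r : 0 <= r -> is_linear (T r).
Proof. by move=> r0; case: (hT.1.1 r r0). Qed.

Lemma T_norm_le r v : 0 <= r -> `|T r v| <= `|v|.
Proof. by move=> r0; have := hT.2 r r0 v; rewrite mul1r. Qed.

Lemma subP_norm_le x : `|x - P x| <= `|x| + `|x|.
Proof. by apply: le_trans (ler_normB _ _) _; rewrite lerD2l. Qed.

Lemma P_subP x : P (x - P x) = 0.
Proof. by rewrite (is_linearB Plin) PP subrr. Qed.

Lemma subP_linear : is_linear (fun x => x - P x).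
Proof. by move=> a x y; rewrite Plin scalerBr opprD addrACA. Qed.

Lemma subPB u v : (u - v) - P (u - v) = (u - P u) - (v - P v).
Proof. exact (is_linearB subP_linear u v). Qed.

Lemma subP_L_le z : D z -> P z = z -> `|L z - P (L z)| <= b * `|z|.
Proof.
move=> Dz Pz; apply/ler_addgt0Pr => e e0.
have [d d0 Td] := (cvg_at_right0P _ _).1 (hgT.2 z Dz) _ (divr_gt0 e0 (ltr0n _ 2)).
set h := d / 2; have h0 : 0 < h by rewrite divr_gt0.
have hd : h < d by rewrite /h ltr_pdivrMr // ltr_pMr ?ltr1n.
set q := diffq T z h; rewrite -[L z](subKr q) subPB.
apply: le_trans (ler_normB _ _) _; apply: lerD.
  rewrite /q /diffq (is_linearZ Plin) -scalerBr (is_linearB Plin) Pz opprB addrA subrK.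
  rewrite normrZ normfV gtr0_norm // ler_pdivrMl // mulrA -{1 2}Pz.
  exact: (hb (ltW h0)).2.
apply: le_trans (subP_norm_le _) _; rewrite (splitr e).
by apply: lerD; apply: Td.
Qed.

Lemma PT_taylor_le tau z : 0 <= tau -> P z = z -> D z -> D (P (L z)) ->
  `|P (T tau z) - z - tau *: P (L z)| <= tau ^+ 2 * (`|L (P (L z))| + b * `|L z|).
Proof.
move=> tau0 Pz Dz DPLz; have Tlin := C0_semigroup_linear hT.1.
have := semigroup_taylor_le (K := 1) (G := `|L (P (L z))| + b * `|L z|)
  Tlin Plin tau0 ler01 _ _ _ (hgT.2 z Dz).
rewrite !(is_linearB Plin) (is_linearZ Plin) Pz; apply.
- by rewrite addr_ge0 // mulr_ge0.
- by move=> r v r0 _; rewrite mul1r (le_trans (P_le _)) // T_norm_le.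
move=> r r0 _; set w := P (L z).
have -> : P (T r (L z) - L z) = P (T r w - w) + P (T r (L z - w)).
  rewrite (is_linearB (T_linear r0)) !(is_linearB Plin).
  by rewrite [RHS]addrC [RHS]addrA subrK /w PP.
apply: le_trans (ler_normD _ _) _; rewrite mulrDr; apply: lerD.
  apply: le_trans (P_le _) _.
  have := semigroup_increment_le Tlin r0 ler01 _ (hgT.2 w DPLz); rewrite mulr1; apply.
  by move=> r' v r'0 _; rewrite mul1r T_norm_le.
by rewrite mulrA; apply: (hb r0).1.
Qed.

Lemma S_comm s y : 0 <= s -> P y = y -> D y ->
  D (P (S s y)) /\ P (L (P (S s y))) = S s (P (L y)).
Proof.
move=> s0 Py Dy; have Dy' : [set x | D (P x)] y by rewrite /= Py.
by have := C0_generator_comm hS hgS s0 Dy'; rewrite Py.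
Qed.

Lemma S_range s y : 0 <= s -> P y = y -> D y -> D (P (L y)) -> P (S s y) = S s y.
Proof.
move=> s0 Py Dy DLy; apply/esym/subr0_eq.
apply: (C0_kernel_invariant (B := fun x => x - P x) hS hgS) => //=.
- split; first exact: subP_linear.
  by exists (1 + 1) => x; rewrite mulrDl mul1r subP_norm_le.
- by move=> x _; rewrite PP subrr.
- by rewrite Py.
- by rewrite Py PP.
- by rewrite Py subrr.
Qed.

Lemma local_error_at_le tau K z : 0 <= tau -> 0 <= K ->
  (forall r x, 0 <= r -> r <= tau -> `|S r x| <= K * `|x|) ->
  P z = z -> D z -> D (P (L z)) ->
  `|P (T tau z) - S tau z| <=
    tau ^+ 2 * ((1 + K) * `|P (L (P (L z)))| + (b + b) * `|P (L z)| + b ^+ 2 * `|z|).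
Proof.
move=> tau0 K0 SK Pz Dz DLz; set w := P (L z).
have Pw : P w = w by rewrite /w PP.
have eT := PT_taylor_le tau0 Pz Dz DLz.
have Dz' : [set x | D (P x)] z by rewrite /= Pz.
have DAz : [set x | D (P x)] (P (L (P z))) by rewrite /= Pz PP.
have eS := C0_taylor_le hS hgS tau0 K0 SK Dz' DAz.
rewrite /= Pz PP -/w in eS.
have Lz : `|L z| <= `|w| + b * `|z|.
  by rewrite -[L z](subrKC w) (le_trans (ler_normD _ _)) // lerD2l subP_L_le.
have Lw : `|L w| <= `|P (L w)| + b * `|w|.
  rewrite -{1}[L w](subrKC (P (L w))) (le_trans (ler_normD _ _)) // lerD2l.
  by rewrite subP_L_le // Pw.
apply: le_trans (ler_distD (z + tau *: w) _ _) _.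
rewrite [X in _ + X]distrC !opprD !addrA (le_trans (lerD eT eS)) // -mulrDr.
rewrite ler_wpM2l ?sqr_ge0 //.
have := ler_wpM2l b0 Lz; lra.
Qed.

Lemma local_error_le t K s tau y : 1 <= K ->
  (forall r x, 0 <= r -> r <= t -> `|S r x| <= K * `|x|) ->
  0 <= s <= t -> 0 <= tau <= t -> P y = y -> D y -> D (P (L y)) ->
  `|P (T tau (S s y)) - S tau (S s y)| <=
    tau ^+ 2 * (K * ((1 + b) ^+ 2 + K)) * (`|y| + `|L y| + `|L (P (L y))|).
Proof.
move=> K1 SK /andP[s0 st] /andP[tau0 taut] Py Dy DLy.
have K0 : 0 <= K := le_trans ler01 K1.
set z := S s y; set w := P (L y); have Pw : P w = w by rewrite /w PP.
have Pz : P z = z := S_range s0 Py Dy DLy.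
have [Dz Lz] := S_comm s0 Py Dy; rewrite Pz -/w in Dz Lz.
have [DLz LLz] := S_comm s0 Pw DLy; rewrite -Lz PP in DLz LLz.
apply: le_trans (local_error_at_le tau0 K0 _ Pz Dz DLz) _.
  by move=> r x r0 rtau; apply: SK => //; apply: le_trans taut.
rewrite -mulrA ler_wpM2l ?sqr_ge0 // LLz Lz.
have Sz : `|z| <= K * `|y| by apply: SK.
have Sw : `|S s w| <= K * `|L y|.
  by apply: le_trans (SK _ _ s0 st) _; rewrite ler_wpM2l ?P_le.
have SLw : `|S s (P (L w))| <= K * `|L w|.
  by apply: le_trans (SK _ _ s0 st) _; rewrite ler_wpM2l ?P_le.
set G := (1 + b) ^+ 2 + K.
have b2 : 0 <= b ^+ 2 := sqr_ge0 b.
have GE : G = 1 + (b + b) + b ^+ 2 + K by rewrite /G sqrrD expr1n mul1r mulr2n.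
have bb : 0 <= b + b := addr_ge0 b0 b0.
have G1 : 1 + K <= G by rewrite GE; lra.
have G2 : b + b <= G by rewrite GE; lra.
have G3 : b ^+ 2 <= G by rewrite GE; lra.
apply: le_trans (lerD (lerD (ler_wpM2r (normr_ge0 _) G1) (ler_wpM2r (normr_ge0 _) G2))
  (ler_wpM2r (normr_ge0 _) G3)) _.
have G0 : 0 <= G := le_trans b2 G3.
rewrite -!mulrDr [K * G]mulrC -mulrA ler_wpM2l // !mulrDr; lra.
Qed.

Lemma PTP_dist_le tau u v : 0 <= tau ->
  `|P (T tau (P u)) - P (T tau (P v))| <= `|u - v|.
Proof.
move=> tau0; rewrite -(is_linearB Plin) -(is_linearB (T_linear tau0)) -(is_linearB Plin).
by rewrite (le_trans (P_le _)) // (le_trans (T_norm_le _ tau0)) // P_le.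
Qed.

Lemma chernoff_le t K n tau y : 1 <= K ->
  (forall r x, 0 <= r -> r <= t -> `|S r x| <= K * `|x|) ->
  0 <= tau -> n%:R * tau <= t -> P y = y -> D y -> D (P (L y)) ->
  `|iter n (fun v => P (T tau (P v))) y - S (n%:R * tau) y| <=
    n%:R * (tau ^+ 2 * (K * ((1 + b) ^+ 2 + K)) * (`|y| + `|L y| + `|L (P (L y))|)).
Proof.
move=> K1 SK tau0 nt Py Dy DLy; have [_ S0 Ssg] := C0_semigroup_linear hS.
have tele := telescope_le (m := n)
  (u := fun k => `|iter k (fun v => P (T tau (P v))) y - S (k%:R * tau) y|)
  (c := tau ^+ 2 * (K * ((1 + b) ^+ 2 + K)) * (`|y| + `|L y| + `|L (P (L y))|)).
rewrite /= mul0r S0 subrr normr0 add0r in tele; apply: tele => k kn.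
have r0 : 0 <= k%:R * tau by rewrite mulr_ge0.
have rt : k%:R * tau + tau <= t.
  by apply: le_trans nt; rewrite -{2}(mul1r tau) -mulrDl natr1 ler_wpM2r // ler_nat.
rewrite -natr1 mulrDl mul1r (addrC (k%:R * tau)) (Ssg _ _ _ tau0 r0).
apply: le_trans (ler_distD (P (T tau (P (S (k%:R * tau) y)))) _ _) _.
rewrite lerD ?PTP_dist_le // S_range // (local_error_le (t := t)) //.
  by rewrite r0 (le_trans _ rt) // lerDl.
by rewrite tau0 (le_trans _ rt) // lerDr.
Qed.

End ProjectedSemigroups.

Section TrotterIteration.
Context {R : realType} {X : completeNormedModType R}.
Variables (T S : R -> X -> X) (D : set X) (L P M : X -> X) (b dt : R) (n0 : nat).
Hypotheses (hT : C0_contraction_semigroup T) (hgT : generator_of T D L)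
  (hP : projection_op P)
  (P_le : forall x, `|P x| <= `|x|) (hM : contraction_op M)
  (hE : opnorm_le (fun x => iter n0 M x - P x) dt)
  (MP : forall y, iter n0 M (P y) = P y) (PM : forall y, P (iter n0 M y) = P y)
  (dt0 : 0 <= dt) (dt1 : dt < 1) (b0 : 0 <= b)
  (hb : forall t : R, 0 <= t ->
     opnorm_le (fun x => P (T t (x - P x))) (t * b) /\
     opnorm_le (fun x => T t (P x) - P (T t (P x))) (t * b))
  (hS : C0_semigroup S)
  (hgS : generator_of S [set x | D (P x)] (fun x => P (L (P x)))).

Let Plin := projection_linear hP.
Let PP := projection_idem hP.

Local Notation trotter tau := (fun y => iter n0 M (T tau y)).

Lemma trotter_norm_le k tau x : 0 <= tau ->
  `|iter k (trotter tau) x| <= `|x|.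
Proof.
move=> tau0; elim: k => //= k IH.
by rewrite (le_trans (contraction_iter _ _ hM)) // (le_trans (T_norm_le hT _ tau0)).
Qed.

Lemma subP_trotter_step_le tau v : 0 <= tau ->
  `|iter n0 M (T tau v) - P (iter n0 M (T tau v))| <=
    dt * `|v - P v| + dt * (tau * b * `|v|).
Proof.
move=> tau0; have Tlin := T_linear hT tau0; rewrite PM.
pose E y := iter n0 M y - P y.
change (`|E (T tau v)| <= dt * `|v - P v| + dt * (tau * b * `|v|)).
have EB y z : E (y + z) = E y + E z.
  by rewrite /E (is_linearD (is_linear_iter n0 hM.1)) (is_linearD Plin) opprD addrACA.
have EP y : E (P y) = 0 by rewrite /E MP PP subrr.
have -> : T tau v = T tau (v - P v) + (T tau (P v) - P (T tau (P v))) + P (T tau (P v)).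
  by rewrite -addrA subrK -(is_linearD Tlin) subrK.
rewrite EB EP addr0 EB; apply: le_trans (ler_normD _ _) _.
apply: lerD; apply: le_trans (hE _) _; rewrite ler_wpM2l //.
  exact: T_norm_le.
exact: (hb tau0).2.
Qed.

Lemma subP_trotter_le tau v : 0 <= tau ->
  `|iter n0 M (T tau v) - P (iter n0 M (T tau v))| <= dt * `|v|.
Proof. by move=> tau0; rewrite PM (le_trans (hE _)) // ler_wpM2l // T_norm_le. Qed.

Lemma subP_trotter_iter_le tau x A : 0 <= tau -> `|x - P x| <= A ->
  forall k, `|iter k (trotter tau) x - P (iter k (trotter tau) x)| <=
    dt ^+ k * A + tau * b * `|x| / (1 - dt).
Proof.
move=> tau0 xA; apply: (affine_recursion_le
  (u := fun k => `|iter k (trotter tau) x - P (iter k (trotter tau) x)|)) => //.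
- by rewrite dt0.
- by rewrite !mulr_ge0.
move=> k; apply: le_trans (subP_trotter_step_le _ tau0) _.
rewrite lerD2l; apply: le_trans (ler_piMl _ (ltW dt1)) _; first by rewrite !mulr_ge0.
by rewrite ler_wpM2l ?mulr_ge0 // trotter_norm_le.
Qed.

Lemma P_trotter_iter_le tau x n : 0 <= tau ->
  `|P (iter n (trotter tau) x) - iter n (fun v => P (T tau (P v))) (P x)| <=
    tau * b * ((`|x| + `|x|) / (1 - dt) + n%:R * (tau * b * `|x| / (1 - dt))).
Proof.
move=> tau0; have Tlin := T_linear hT tau0.
have := geometric_forcing_le (q := dt) (a := tau * b) (C := `|x| + `|x|)
  (B := tau * b * `|x| / (1 - dt))
  (v := fun k => `|P (iter k (trotter tau) x) - iter k (fun v => P (T tau (P v))) (P x)|).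
rewrite (_ : `|_ - iter 0 _ (P x)| = 0); last by rewrite subrr normr0.
move=> tracking; rewrite -[X in _ <= X]add0r.
apply: tracking => //; rewrite ?dt0 ?mulr_ge0 ?addr_ge0 // => k.
rewrite !iterS PM; set u := iter k _ x; set a := iter k _ (P x).
have -> : P (T tau u) = P (T tau (P u)) + P (T tau (u - P u)).
  by rewrite -(is_linearD Plin) -(is_linearD Tlin) addrC subrK.
rewrite addrAC; apply: le_trans (ler_normD _ _) _; apply: lerD.
  by have := PTP_dist_le hT hP P_le (P u) a tau0; rewrite PP.
have := (hb tau0).1 (u - P u); rewrite P_subP // subr0 => /le_trans; apply.
rewrite ler_wpM2l ?mulr_ge0 //; apply: subP_trotter_iter_le => //.
exact: subP_norm_le.
Qed.

Lemma trotter_error_le t K n x : 0 <= t -> 1 <= K ->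
  (forall r y, 0 <= r -> r <= t -> `|S r y| <= K * `|y|) ->
  (0 < n)%N -> D (P x) -> D (P (L (P x))) ->
  `|iter n (trotter (t / n%:R)) x - S t (P x)| <=
    ((3 * t * b + (t * b) ^+ 2) / (1 - dt) + t ^+ 2 * (K * ((1 + b) ^+ 2 + K))) / n%:R
      * (`|x| + `|L (P x)| + `|L (P (L (P x)))|) + dt ^+ n * `|x|.
Proof.
case: n => // n t0 K1 SK _ DPx DLPx; set tau := t / n.+1%:R.
have tau0 : 0 <= tau by rewrite divr_ge0.
have ntau : n.+1%:R * tau = t by rewrite /tau mulrC divfK.
set u := iter n.+1 _ x; set a := iter n.+1 (fun v => P (T tau (P v))) (P x).
have eP := P_trotter_iter_le x n.+1 tau0.
have ntau_le : n.+1%:R * tau <= t by rewrite ntau.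
have eS := chernoff_le hT hgT hP P_le b0 hb hS hgS K1 SK tau0 ntau_le (PP x) DPx DLPx.
rewrite ntau in eS.
have eQ : `|u - P u| <= dt ^+ n.+1 * `|x| + tau * b * `|x| / (1 - dt).
  have := subP_trotter_iter_le tau0 (subP_trotter_le x tau0) n.
  rewrite -iterSr => /le_trans; apply; rewrite mulrA -exprSr lerD2l.
  rewrite ler_wpM2r ?invr_ge0 ?subr_ge0 ?(ltW dt1) // ler_wpM2l ?mulr_ge0 //.
  exact: (trotter_norm_le 1).
have -> : u - S t (P x) = (P u - a) + (a - S t (P x)) + (u - P u).
  by rewrite (addrA (P u - a)) subrK [RHS]addrC (addrA (u - P u)) subrK.
apply: le_trans (ler_normD _ _) _; apply: le_trans (lerD (ler_normD _ _) (lexx _)) _.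
apply: le_trans (lerD (lerD eP eS) eQ) _.
set N := `|x| + _ + _; set NP := `|P x| + _ + _; set G := K * _.
set A := (3 * t * b + (t * b) ^+ 2) / (1 - dt).
have dt1' : 1 - dt != 0 by rewrite subr_eq0 gt_eqF.
rewrite [leLHS](_ : _ =
    (A * `|x| + t ^+ 2 * G * NP) / n.+1%:R + dt ^+ n.+1 * `|x|); last first.
  by rewrite /A -ntau; field; rewrite dt1' andbT nat1r pnatr_eq0.
rewrite lerD2r [leRHS]mulrAC ler_wpM2r ?invr_ge0 // mulrDl lerD // ler_wpM2l //.
- by rewrite /A divr_ge0 ?subr_ge0 ?(ltW dt1) // addr_ge0 ?sqr_ge0 // !mulr_ge0.
- by rewrite /N -addrA lerDl addr_ge0.
- by rewrite !mulr_ge0 ?addr_ge0 ?sqr_ge0 // (le_trans ler01).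
- by rewrite /NP /N !lerD2r.
Qed.

End TrotterIteration.

Unset Implicit Arguments.

Theorem corollary3p3 (R : realType) (X : completeNormedModType R)
  (T : R -> X -> X) (D : set X) (L : X -> X) (M P : X -> X)
  (ct delta b : R) (S : R -> X -> X) :
  C0_contraction_semigroup T ->
  generator_of T D L ->
  contraction_op M ->
  projection_op P ->
  0 < delta -> delta < 1 -> 0 <= ct ->
  (forall n : nat, (1 <= n)%N ->
     opnorm_le (fun x => iter n M x - P x) (ct * delta ^+ n)) ->
  0 <= b ->
  (forall t : R, 0 <= t ->
     opnorm_le (fun x => P (T t (x - P x))) (t * b) /\
     opnorm_le (fun x => T t (P x) - P (T t (P x))) (t * b)) ->
  C0_semigroup S ->
  generator_of S [set x | D (P x)] (fun x => P (L (P x))) ->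
  forall t : R, 0 <= t ->
  exists (c : R) (n0 : nat),
    0 < c /\ (1 <= n0)%N /\ ct * delta ^+ n0 < 1 /\
    forall (n : nat) (x : X), (1 <= n)%N ->
      D (P x) -> D (P (L (P x))) ->
      `| iter n (fun y => iter n0 M (T (t / n%:R) y)) x - S t (P x) |
        <= c / n%:R * (`|x| + `|L (P x)| + `|L (P (L (P x)))|)
           + (ct * delta ^+ n0) ^+ n * `|x|.
Proof.
move=> hT hgT hM hP delta0 delta1 ct0 hMP b0 hb hS hgS t t0.
have P_le := P_norm_le hM delta0 delta1 ct0 hMP.
have [K [K1 SK]] := C0_semigroup_locally_bounded hS t0.
have [n0 n0_gt0 dt1] : exists2 n0 : nat, (0 < n0)%N & ct * delta ^+ n0 < 1.
  by apply: exists_geometric_lt; rewrite ?gtr0_norm.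
have dt0 : 0 <= ct * delta ^+ n0 by rewrite mulr_ge0 // exprn_ge0 // ltW.
set c := (3 * t * b + (t * b) ^+ 2) / (1 - ct * delta ^+ n0) +
  t ^+ 2 * (K * ((1 + b) ^+ 2 + K)).
exists (Num.max c 1), n0; split; first by rewrite lt_max ltr01 orbT.
split=> //; split=> // n x n_gt0 DPx DLPx.
apply: le_trans (trotter_error_le hT hgT hP P_le hM (hMP _ n0_gt0)
  (iter_M_range hM delta0 delta1 ct0 hMP n0) (P_iter_M hM delta0 delta1 ct0 hMP n0)
  dt0 dt1 b0 hb hS hgS t0 K1 SK n_gt0 DPx DLPx) _.
rewrite lerD2r ler_wpM2r ?addr_ge0 // ler_wpM2r ?invr_ge0 //.
by rewrite le_max lexx.
Qed.
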